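(* The SRT$_{\mathsf{AD}}$-definable transformations are closed under union, intersection and composition, and the SRT$_{\mathsf{AU}}$-definable transformations are closed under union, intersection and composition. (Here, for a class $\mathcal{C}$ of transducers, closure means: for $\mathcal{C}$-transducers $\mathcal{S}_1,\mathcal{S}_2$ over a common linear group and compatible label sets, the union, intersection (same signature) and composition $[\![\mathcal{S}_1]\!]\cdot[\![\mathcal{S}_2]\!]$ are each equal to $[\![\mathcal{S}]\!]$ for some $\mathcal{C}$-transducer $\mathcal{S}$.)
   Context: A linear group is a triple $\mathbf{G}=(D,\leq,+)$ where $D$ is an infinite set, $\leq$ is a total order on $D$, and $(D,+)$ is a group with identity $0$. For finite label sets $\Sigma,\Gamma$, a $(\Sigma,\Gamma,\mathbf{G})$-streaming register transducer (SRT) is a tuple $\mathcal{S}=(Q,q_0,k,R_0,\Delta)$: $Q$ finite set of states, $q_0\in Q$, $k\in\mathbb{N}$ registers, initial values $R_0\in D^k$, and transitions $\Delta\subseteq Q\times\Sigma\times\{>,=,<\}^k\times\{\mathsf{old},\mathsf{new},\mathsf{add}\}^k\times\{1,\dots,k\}\times\Gamma\times Q$. A transition $(q,\sigma,l,m,u,\gamma,q')$ enables the step $(q,R)\xrightarrow[(\gamma,d')]{(\sigma,d)}(q',R')$ iff (1) for every $i$, $d>R[i]$, $d=R[i]$ or $d<R[i]$ according as $l[i]$ is $>$, $=$, $<$; (2) $R'[i]=R[i]$, $d$, or $R[i]+d$ according as $m[i]$ is $\mathsf{old}$, $\mathsf{new}$, $\mathsf{add}$; (3) $d'=R'[u]$.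 A run over $s\in(\Sigma\times D)^*$ of length $n$ generating $t\in(\Gamma\times D)^*$ is a sequence of $n$ enabled steps from $(q_0,R_0)$ reading $s[i]$ and emitting $t[i]$. $s\otimes t$ is the word with $i$-th letter $(s[i],t[i])$; $[\![\mathcal{S}]\!]=\{s\otimes t:\text{there is a run over }s\text{ generating }t\}$. SRT$_{\mathsf{A}}$ (add-free): all update vectors lie in $\{\mathsf{old},\mathsf{new}\}^k$. SRT$_{\mathsf{AD}}$: add-free and the order $\leq$ of $\mathbf{G}$ is dense (for $a<b$ there is $c$ with $a<c<b$). SRT$_{\mathsf{AU}}$: add-free and $R_0=(0,\dots,0)$. Composition: for $\mathcal{T}_1$ over $(\Sigma\times D)\times(\Gamma\times D)$ and $\mathcal{T}_2$ over $(\Gamma\times D)\times(\Theta\times D)$, $\mathcal{T}_1\cdot\mathcal{T}_2$ is the set of $s_1\otimes s_2$ ($s_1\in(\Sigma\times D)^*$, $s_2\in(\Theta\times D)^*$) such that some $s_3\in(\Gamma\times D)^*$ has $s_1\otimes s_3\in\mathcal{T}_1$ and $s_3\otimes s_2\in\mathcal{T}_2$. *)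

From mathcomp Require Import all_boot.
Set Implicit Arguments. Unset Strict Implicit. Unset Printing Implicit Defensive.

Record linear_group := LinearGroup {
  LG_carrier :> Type;
  LG_le : LG_carrier -> LG_carrier -> Prop;
  LG_add : LG_carrier -> LG_carrier -> LG_carrier;
  LG_zero : LG_carrier;
  LG_opp : LG_carrier -> LG_carrier;
  LG_le_refl : forall x, LG_le x x;
  LG_le_antisym : forall x y, LG_le x y -> LG_le y x -> x = y;
  LG_le_trans : forall x y z, LG_le x y -> LG_le y z -> LG_le x z;
  LG_le_total : forall x y, LG_le x y \/ LG_le y x;
  LG_addA : forall x y z, LG_add x (LG_add y z) = LG_add (LG_add x y) z;
  LG_add0x : forall x, LG_add LG_zero x = x;
  LG_addx0 : forall x, LG_add x LG_zero = x;
  LG_addNx : forall x, LG_add (LG_opp x) x = LG_zero;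
  LG_addxN : forall x, LG_add x (LG_opp x) = LG_zero;
  LG_infinite : exists f : nat -> LG_carrier, injective f
}.

Definition LG_lt (G : linear_group) (x y : G) : Prop := LG_le x y /\ x <> y.

Definition dense (G : linear_group) : Prop :=
  forall a b : G, LG_lt a b -> exists c : G, LG_lt a c /\ LG_lt c b.

Inductive cmp := CGt | CEq | CLt.
Inductive upd := UOld | UNew | UAdd.

(* A (Sig,Gam,G)-streaming register transducer; registers indexed by 'I_k
   (i.e. 0..k-1 instead of 1..k). *)
Record SRT (G : linear_group) (Sig Gam : finType) := MkSRT {
  srt_Q : finType;
  srt_q0 : srt_Q;
  srt_k : nat;
  srt_R0 : 'I_srt_k -> G;
  srt_Delta : srt_Q -> Sig -> ('I_srt_k -> cmp) -> ('I_srt_k -> upd) ->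
              'I_srt_k -> Gam -> srt_Q -> Prop
}.

Definition cmp_ok (G : linear_group) (c : cmp) (d r : G) : Prop :=
  match c with
  | CGt => LG_lt r d
  | CEq => d = r
  | CLt => LG_lt d r
  end.

Definition upd_val (G : linear_group) (m : upd) (r d : G) : G :=
  match m with
  | UOld => r
  | UNew => d
  | UAdd => LG_add r d
  end.

Definition step (G : linear_group) (Sig Gam : finType) (S : SRT G Sig Gam)
  (q : srt_Q S) (R : 'I_(srt_k S) -> G) (sig : Sig) (d : G)
  (gam : Gam) (d' : G) (q' : srt_Q S) (R' : 'I_(srt_k S) -> G) : Prop :=
  exists (l : 'I_(srt_k S) -> cmp) (m : 'I_(srt_k S) -> upd) (u : 'I_(srt_k S)),
    @srt_Delta G Sig Gam S q sig l m u gam q' /\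
    (forall i, cmp_ok (l i) d (R i)) /\
    (forall i, R' i = upd_val (m i) (R i) d) /\
    d' = R' u.

Fixpoint runs_from (G : linear_group) (Sig Gam : finType) (S : SRT G Sig Gam)
  (q : srt_Q S) (R : 'I_(srt_k S) -> G) (w : seq ((Sig * G) * (Gam * G))) : Prop :=
  match w with
  | [::] => True
  | ((sig, d), (gam, d')) :: w' =>
      exists q' R', @step G Sig Gam S q R sig d gam d' q' R' /\ @runs_from G Sig Gam S q' R' w'
  end.

(* [[S]] : a word of pairs s (x) t is in the semantics iff there is a run
   over s = unzip1 w generating t = unzip2 w from (q0,R0). *)
Definition sem (G : linear_group) (Sig Gam : finType) (S : SRT G Sig Gam)
  (w : seq ((Sig * G) * (Gam * G))) : Prop :=
  @runs_from G Sig Gam S (@srt_q0 G Sig Gam S) (@srt_R0 G Sig Gam S) w.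

Definition compose (G : linear_group) (Sig Gam The : finType)
  (T1 : seq ((Sig * G) * (Gam * G)) -> Prop)
  (T2 : seq ((Gam * G) * (The * G)) -> Prop)
  (w : seq ((Sig * G) * (The * G))) : Prop :=
  exists s3 : seq (Gam * G),
    size s3 = size w /\ T1 (zip (unzip1 w) s3) /\ T2 (zip s3 (unzip2 w)).

Definition add_free (G : linear_group) (Sig Gam : finType) (S : SRT G Sig Gam) :=
  forall q a l m u g q', @srt_Delta G Sig Gam S q a l m u g q' -> forall i, m i <> UAdd.

Definition SRT_class := forall (G : linear_group) (Sig Gam : finType), SRT G Sig Gam -> Prop.

Definition is_SRT_AD : SRT_class := fun G Sig Gam S => add_free S /\ dense G.
Definition is_SRT_AU : SRT_class :=
  fun G Sig Gam S => add_free S /\ forall i, @srt_R0 G Sig Gam S i = LG_zero G.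

Definition closed_union (C : SRT_class) : Prop :=
  forall (G : linear_group) (Sig Gam : finType) (S1 S2 : SRT G Sig Gam),
    C G Sig Gam S1 -> C G Sig Gam S2 ->
    exists S : SRT G Sig Gam, C G Sig Gam S /\
      forall w, sem S w <-> (sem S1 w \/ sem S2 w).

Definition closed_inter (C : SRT_class) : Prop :=
  forall (G : linear_group) (Sig Gam : finType) (S1 S2 : SRT G Sig Gam),
    C G Sig Gam S1 -> C G Sig Gam S2 ->
    exists S : SRT G Sig Gam, C G Sig Gam S /\
      forall w, sem S w <-> (sem S1 w /\ sem S2 w).

Definition closed_comp (C : SRT_class) : Prop :=
  forall (G : linear_group) (Sig Gam The : finType)
         (S1 : SRT G Sig Gam) (S2 : SRT G Gam The),
    C G Sig Gam S1 -> C G Gam The S2 ->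
    exists S : SRT G Sig The, C G Sig The S /\
      forall w, sem S w <-> compose (sem S1) (sem S2) w.

(* An add-free SRT can only compare its input with each register and keep a
   register or overwrite it with the input.  Intersection must check that two
   outputs agree, and composition feeds the output of one transducer to the
   other as its input; both need comparisons between registers and copies of
   registers into registers.  We therefore pass through order-type machines,
   whose guards are the complete order type of the registers and the input and
   whose updates are arbitrary copies: for these, union, intersection and
   composition are direct constructions on the disjoint union of the register
   sets.  Conversely, an order-type machine with register set I is simulated by
   an add-free SRT with |I| + 1 registers whose finite state stores the order
   type of the simulated registers and a pointer from each of them to a
   physical register: a copy is a change of pointer, and the input is loaded
   into a physical register that nothing points to.  The constructions keep the
   linear group and the initial register values, so density and zero
   initialisation are simply preserved. *)

From mathcomp Require Import all_boot boolp.
Set Implicit Arguments. Unset Strict Implicit. Unset Printing Implicit Defensive.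

Section OrderType.
Variable G : linear_group.

Lemma LG_lt_le_asym (x y : G) : LG_lt x y -> LG_le y x -> False.
Proof. by move=> [xy nxy] yx; apply: nxy; apply: LG_le_antisym. Qed.

(* [None] stands for the input value [d]. *)
Definition order_type (I : Type) (R : I -> G) (d : G) : rel (option I) :=
  fun x y => `[< LG_le (oapp R d x) (oapp R d y) >].

Lemma relpre_order_type (I J : Type) (f : option I -> option J) (R : J -> G) d
    (R' : I -> G) d' :
  (forall x, oapp R d (f x) = oapp R' d' x) ->
  (relpre f (order_type R d) : rel _) = order_type R' d'.
Proof.
by move=> E; apply: funext => x; apply: funext => y; rewrite /relpre /order_type /= !E.
Qed.

Lemma oapp_omap (I J : Type) (h : I -> J) (R : J -> G) d x :
  oapp R d (omap h x) = oapp (R \o h) d x.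
Proof. by case: x. Qed.

Lemma order_type_eqP (I : Type) (R : I -> G) d x y :
  reflect (oapp R d x = oapp R d y) (order_type R d x y && order_type R d y x).
Proof.
apply: (iffP andP) => [[/asboolP xy /asboolP yx] | E]; first exact: LG_le_antisym.
by split; apply/asboolP; rewrite E; apply: LG_le_refl.
Qed.

Definition cmpb (le_dr le_rd : bool) : cmp :=
  if le_dr then (if le_rd then CEq else CLt) else CGt.

Definition cmp_of (d r : G) : cmp := cmpb `[< LG_le d r >] `[< LG_le r d >].

Lemma cmp_of_ok (d r : G) : cmp_ok (cmp_of d r) d r.
Proof.
rewrite /cmp_of /cmpb; have [dr|ndr] := asboolP (LG_le d r).
  have [rd|nrd] := asboolP (LG_le r d); first exact: LG_le_antisym.
  by split=> // E; apply: nrd; rewrite E; apply: LG_le_refl.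
split; first by case: (LG_le_total r d).
by move=> E; apply: ndr; rewrite E; apply: LG_le_refl.
Qed.

Lemma cmp_ok_inj c c' (d r : G) : cmp_ok c d r -> cmp_ok c' d r -> c = c'.
Proof.
case: c c' => -[] //= H H'; exfalso; first [
  subst d; by [apply: LG_lt_le_asym H (LG_le_refl _) | apply: LG_lt_le_asym H' (LG_le_refl _)]
| exact: LG_lt_le_asym H (proj1 H') ].
Qed.

Lemma cmp_of_le (d r : G) : (if cmp_of d r is CGt then false else true) = `[< LG_le d r >].
Proof. by rewrite /cmp_of /cmpb; case: `[< LG_le d r >]; case: `[< LG_le r d >]. Qed.

Lemma cmp_of_ge (d r : G) : (if cmp_of d r is CLt then false else true) = `[< LG_le r d >].
Proof.
rewrite /cmp_of /cmpb.
case: (asboolP (LG_le d r)) => dr; case: (asboolP (LG_le r d)) => rd //.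
by case: (LG_le_total d r).
Qed.

Lemma cmp_okP c (d r : G) : cmp_ok c d r <-> c = cmp_of d r.
Proof. by split=> [/cmp_ok_inj|->]; [apply | ]; apply: cmp_of_ok. Qed.

End OrderType.

(* A transition loads each register [i] with the input if [src i = None] and
   with the old value of register [j] if [src i = Some j]. *)
Record OTM (G : linear_group) (Sig Gam : finType) := MkOTM {
  otm_Q : finType;
  otm_q0 : otm_Q;
  otm_I : finType;
  otm_R0 : otm_I -> G;
  otm_Delta : otm_Q -> Sig -> rel (option otm_I) -> (otm_I -> option otm_I) ->
              otm_I -> Gam -> otm_Q -> Prop
}.
Arguments otm_R0 {G Sig Gam}.

Fixpoint otm_runs (G : linear_group) (Sig Gam : finType) (M : OTM G Sig Gam)
    (q : otm_Q M) (R : otm_I M -> G) (w : seq ((Sig * G) * (Gam * G))) : Prop :=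
  if w is ((a, d), (g, d')) :: w' then
    exists src u q', otm_Delta q a (order_type R d) src u g q' /\
      d' = oapp R d (src u) /\ otm_runs q' (oapp R d \o src) w'
  else True.

Definition otm_sem (G : linear_group) (Sig Gam : finType) (M : OTM G Sig Gam) :=
  otm_runs (otm_q0 M) (otm_R0 M).

Section SRTtoOTM.
Variables (G : linear_group) (Sig Gam : finType) (S : SRT G Sig Gam).

Definition src_of_upd (m : 'I_(srt_k S) -> upd) (i : 'I_(srt_k S)) :=
  if m i is UNew then None else Some i.

Definition otm_of_srt : OTM G Sig Gam :=
  @MkOTM G Sig Gam (srt_Q S) (srt_q0 S) 'I_(srt_k S) (@srt_R0 _ _ _ S)
    (fun q a gd src u g q' => exists l m, srt_Delta q a l m u g q' /\
       l = (fun i => cmpb (gd None (Some i)) (gd (Some i) None)) /\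
       src = src_of_upd m).

Hypothesis S_add_free : add_free S.

Lemma upd_val_src_of_upd m (R : 'I_(srt_k S) -> G) d i :
  m i <> UAdd -> upd_val (m i) (R i) d = oapp R d (src_of_upd m i).
Proof. by rewrite /src_of_upd; case: (m i). Qed.

Lemma otm_of_srt_runs q R w : runs_from q R w <-> otm_runs (M := otm_of_srt) q R w.
Proof.
elim: w q R => [//|[[a d] [g d']] w IH] q R /=; split.
- move=> [q' [R' [[l [m [u [HD [Hl [HR ->]]]]]] Hw]]].
  have ER' : R' = oapp R d \o src_of_upd m.
    by apply: funext => i; rewrite HR upd_val_src_of_upd //; exact: S_add_free HD _.
  subst R'; exists (src_of_upd m), u, q'; split; last by split=> //; apply/IH.
  exists l, m; split=> //; split=> //.
  by apply: funext=> i; apply/cmp_okP.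
- move=> [src [u [q' [[l [m [HD [El ->]]]] [-> Hw]]]]].
  exists q', (oapp R d \o src_of_upd m); split; last exact/IH.
  exists l, m, u; split=> //; split; first by move=> i; rewrite El; apply: cmp_of_ok.
  by split=> // i; rewrite upd_val_src_of_upd //; exact: S_add_free HD _.
Qed.

Lemma otm_of_srt_sem : sem S = otm_sem otm_of_srt.
Proof. by apply: funext=> w; apply/propext/otm_of_srt_runs. Qed.

End SRTtoOTM.

Section OTMtoSRT.
Variables (G : linear_group) (Sig Gam : finType) (M : OTM G Sig Gam).
Local Notation I := (otm_I M).
Local Notation P := #|I|.+1.

Definition ordmx (R : I -> G) : {ffun I * I -> bool} :=
  [ffun ij => `[< LG_le (R ij.1) (R ij.2) >]].

Definition guard (L : {ffun I * I -> bool}) (c : I -> cmp) : rel (option I) :=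
  fun x y => match x, y with
  | Some i, Some j => L (i, j)
  | None, Some j => if c j is CGt then false else true
  | Some i, None => if c i is CLt then false else true
  | None, None => true
  end.

Lemma guard_ordmx R d : guard (ordmx R) (cmp_of d \o R) = order_type R d.
Proof.
apply: funext => x; apply: funext => y.
case: x y => [i|] [j|]; rewrite /= ?ffunE ?cmp_of_le ?cmp_of_ge //.
by rewrite /order_type asboolT //; apply: LG_le_refl.
Qed.

Definition upd_at (f p : 'I_P) : upd := if p == f then UNew else UOld.

Definition next_ptr (ptr : {ffun I -> 'I_P}) (src : I -> option I) (f : 'I_P) :=
  [ffun i => if src i is Some j then ptr j else f].

Definition sim_Q : finType := (otm_Q M * {ffun I -> 'I_P} * {ffun I * I -> bool})%type.

(* [f] is a physical register that no simulated register points to; it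
   receives the input. *)
Definition sim_Delta (s : sim_Q) (a : Sig) (l : 'I_P -> cmp) (m : 'I_P -> upd)
    (u : 'I_P) (g : Gam) (s' : sim_Q) : Prop :=
  let: (q, ptr, L) := s in
  let gd := guard L (l \o ptr) in
  exists src ul q' f, otm_Delta q a gd src ul g q' /\ f \notin codom ptr /\
    m = upd_at f /\ u = next_ptr ptr src f ul /\
    s' = (q', next_ptr ptr src f, [ffun ij => gd (src ij.1) (src ij.2)]).

Definition ptr0 : {ffun I -> 'I_P} := [ffun i => lift ord_max (enum_rank i)].

(* [ptr0] avoids [ord_max], the spare register; starting it at [0] preserves
   zero initialisation. *)
Definition sim_R0 (p : 'I_P) : G :=
  if unlift ord_max p is Some j then otm_R0 M (enum_val j) else LG_zero G.

Definition srt_of_otm : SRT G Sig Gam :=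
  @MkSRT G Sig Gam sim_Q (otm_q0 M, ptr0, ordmx (otm_R0 M)) P sim_R0 sim_Delta.

Lemma sim_R0_ptr0 : sim_R0 \o ptr0 = otm_R0 M.
Proof. by apply: funext => i; rewrite /= ffunE /sim_R0 liftK enum_rankK. Qed.

Lemma exists_free_reg (ptr : {ffun I -> 'I_P}) : exists f, f \notin codom ptr.
Proof.
case: (pickP (fun f => f \notin codom ptr)) => [f|all_used]; first by exists f.
have : #|'I_P| <= #|codom ptr|.
  by apply/subset_leq_card/subsetP => p _; apply/negbFE/all_used.
by rewrite card_ord => /leq_trans/(_ (card_size _)); rewrite size_codom ltnn.
Qed.

Lemma next_regs (R : 'I_P -> G) d (ptr : {ffun I -> 'I_P}) (src : I -> option I) f :
  f \notin codom ptr ->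
  (fun p => upd_val (upd_at f p) (R p) d) \o next_ptr ptr src f = oapp (R \o ptr) d \o src.
Proof.
move=> Hf; apply: funext => i; rewrite /= ffunE /upd_at.
case: (src i) => [j|] /=; last by rewrite eqxx.
by rewrite ifN //; apply: contraNneq Hf => <-; apply: codom_f.
Qed.

Lemma srt_of_otm_runs q (ptr : {ffun I -> 'I_P}) (R : 'I_P -> G) w :
  runs_from (S := srt_of_otm) (q, ptr, ordmx (R \o ptr)) R w <-> otm_runs q (R \o ptr) w.
Proof.
elim: w q ptr R => [//|[[a d] [g d']] w IH] q ptr R /=; split.
- move=> [s' [R' [[l [m [u [[src [ul [q' [f [HD [Hf [-> [-> ->]]]]]]]] [Hl [HR ->]]]]]] Hw]]].
  have El : l \o ptr = cmp_of d \o (R \o ptr) by apply: funext => i /=; apply/cmp_okP.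
  have ER' : R' = fun p => upd_val (upd_at f p) (R p) d by apply: funext.
  rewrite El guard_ordmx in HD Hw; subst R'.
  have Enext := next_regs R d src Hf.
  exists src, ul, q'; split=> //; split; first exact: (congr1 (fun h => h ul) Enext).
  by rewrite -Enext; apply/IH; rewrite Enext.
- move=> [src [ul [q' [HD [-> Hw]]]]].
  have [f Hf] := exists_free_reg ptr.
  pose R' p := upd_val (upd_at f p) (R p) d.
  have Enext : R' \o next_ptr ptr src f = oapp (R \o ptr) d \o src := next_regs R d src Hf.
  exists (q', next_ptr ptr src f, ordmx (R' \o next_ptr ptr src f)), R'.
  split; last by apply/IH; rewrite Enext.
  exists (cmp_of d \o R), (upd_at f), (next_ptr ptr src f ul); split.
    exists src, ul, q', f.
    change ((cmp_of d \o R) \o ptr) with (cmp_of d \o (R \o ptr)).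
    by rewrite guard_ordmx Enext.
  split; first by move=> p; apply: cmp_of_ok.
  by split=> //; exact: esym (congr1 (fun h => h ul) Enext).
Qed.

Lemma srt_of_otm_add_free : add_free srt_of_otm.
Proof.
move=> [[q ptr] L] a l m u g s' [src [ul [q' [f [_ [_ [-> _]]]]]]] p.
by rewrite /upd_at; case: (p == f).
Qed.

Lemma srt_of_otm_R0 :
  (forall i, otm_R0 M i = LG_zero G) -> forall p, @srt_R0 _ _ _ srt_of_otm p = LG_zero G.
Proof. by move=> R0_zero p; rewrite /= /sim_R0; case: unlift => [j|] //; apply: R0_zero. Qed.

Lemma srt_of_otm_sem : sem srt_of_otm = otm_sem M.
Proof.
apply: funext => w; apply: propext.
by rewrite /sem /otm_sem /= -sim_R0_ptr0 srt_of_otm_runs.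
Qed.

End OTMtoSRT.

Definition copair (A B C : Type) (f : A -> C) (g : B -> C) (x : A + B) : C :=
  match x with inl a => f a | inr b => g b end.

Lemma oapp_copair_inl (G : linear_group) (I1 I2 : Type) (R : I1 + I2 -> G) d
    (src1 : I1 -> option I1) (src2 : I2 -> option (I1 + I2)) :
  (oapp R d \o copair (omap inl \o src1) src2) \o inl = oapp (R \o inl) d \o src1.
Proof. by apply: funext => i; apply: oapp_omap. Qed.

Lemma oapp_copair_inr (G : linear_group) (I1 I2 : Type) (R : I1 + I2 -> G) d
    (src1 : I1 -> option (I1 + I2)) (src2 : I2 -> option I2) :
  (oapp R d \o copair src1 (omap inr \o src2)) \o inr = oapp (R \o inr) d \o src2.
Proof. by apply: funext => i; apply: oapp_omap. Qed.

Section Union.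
Variables (G : linear_group) (Sig Gam : finType) (M1 M2 : OTM G Sig Gam).
Local Notation I := ((otm_I M1 + otm_I M2)%type : finType).
Local Notation Q := ((option (otm_Q M1 + otm_Q M2))%type : finType).

Definition union_Delta_l (q1 : otm_Q M1) (a : Sig) (gd : rel (option I))
    (src : I -> option I) (u : I) (g : Gam) (q' : Q) : Prop :=
  exists src1 u1 q1', otm_Delta q1 a (relpre (omap inl) gd) src1 u1 g q1' /\
    src = copair (omap inl \o src1) (Some \o inr) /\ u = inl u1 /\ q' = Some (inl q1').

Definition union_Delta_r (q2 : otm_Q M2) (a : Sig) (gd : rel (option I))
    (src : I -> option I) (u : I) (g : Gam) (q' : Q) : Prop :=
  exists src2 u2 q2', otm_Delta q2 a (relpre (omap inr) gd) src2 u2 g q2' /\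
    src = copair (Some \o inl) (omap inr \o src2) /\ u = inr u2 /\ q' = Some (inr q2').

Definition otm_union : OTM G Sig Gam :=
  @MkOTM G Sig Gam Q None I (copair (otm_R0 M1) (otm_R0 M2))
    (fun q => match q with
     | None => fun a gd src u g q' =>
         union_Delta_l (otm_q0 M1) a gd src u g q' \/
         union_Delta_r (otm_q0 M2) a gd src u g q'
     | Some (inl q1) => union_Delta_l q1
     | Some (inr q2) => union_Delta_r q2
     end).

Lemma otm_union_runs_l q1 R w :
  otm_runs (M := otm_union) (Some (inl q1)) R w <-> otm_runs q1 (R \o inl) w.
Proof.
elim: w q1 R => [//|[[a d] [g d']] w IH] q1 R /=.
have E : relpre (omap inl) (order_type R d) = order_type (R \o inl) d :> rel _.
  exact/relpre_order_type/oapp_omap.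
split.
- move=> [_ [_ [_ [[src1 [u1 [q1' [HD [-> [-> ->]]]]]] [-> Hw]]]]].
  exists src1, u1, q1'; rewrite -E oapp_omap; do 2!split=> //.
  by move/IH: Hw; rewrite oapp_copair_inl.
- move=> [src1 [u1 [q1' [HD [-> Hw]]]]].
  exists (copair (omap inl \o src1) (Some \o inr)), (inl u1), (Some (inl q1')).
  split; first by exists src1, u1, q1'; rewrite E.
  by rewrite /= oapp_omap; split=> //; apply/IH; rewrite oapp_copair_inl.
Qed.

Lemma otm_union_runs_r q2 R w :
  otm_runs (M := otm_union) (Some (inr q2)) R w <-> otm_runs q2 (R \o inr) w.
Proof.
elim: w q2 R => [//|[[a d] [g d']] w IH] q2 R /=.
have E : relpre (omap inr) (order_type R d) = order_type (R \o inr) d :> rel _.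
  exact/relpre_order_type/oapp_omap.
split.
- move=> [_ [_ [_ [[src2 [u2 [q2' [HD [-> [-> ->]]]]]] [-> Hw]]]]].
  exists src2, u2, q2'; rewrite -E oapp_omap; do 2!split=> //.
  by move/IH: Hw; rewrite oapp_copair_inr.
- move=> [src2 [u2 [q2' [HD [-> Hw]]]]].
  exists (copair (Some \o inl) (omap inr \o src2)), (inr u2), (Some (inr q2')).
  split; first by exists src2, u2, q2'; rewrite E.
  by rewrite /= oapp_omap; split=> //; apply/IH; rewrite oapp_copair_inr.
Qed.

Lemma otm_union_sem w : otm_sem otm_union w <-> otm_sem M1 w \/ otm_sem M2 w.
Proof.
case: w => [|[[a d] [g d']] w]; first by split=> //; left.
rewrite /otm_sem -(otm_union_runs_l _ (otm_R0 otm_union)).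
rewrite -(otm_union_runs_r _ (otm_R0 otm_union)) /=.
split=> [[src [u [q' [[HD|HD] Hw]]]] | [] [src [u [q' [HD Hw]]]]].
- by left; exists src, u, q'.
- by right; exists src, u, q'.
- by exists src, u, q'; split; first left.
- by exists src, u, q'; split; first right.
Qed.

End Union.

Section Inter.
Variables (G : linear_group) (Sig Gam : finType) (M1 M2 : OTM G Sig Gam).
Local Notation I := ((otm_I M1 + otm_I M2)%type : finType).
Local Notation Q := ((otm_Q M1 * otm_Q M2)%type : finType).

Definition inter_Delta (q : Q) (a : Sig) (gd : rel (option I)) (src : I -> option I)
    (u : I) (g : Gam) (q' : Q) : Prop :=
  exists src1 u1 src2 u2,
    otm_Delta q.1 a (relpre (omap inl) gd) src1 u1 g q'.1 /\
    otm_Delta q.2 a (relpre (omap inr) gd) src2 u2 g q'.2 /\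
    src = copair (omap inl \o src1) (omap inr \o src2) /\ u = inl u1 /\
    gd (src u) (src (inr u2)) && gd (src (inr u2)) (src u).

Definition otm_inter : OTM G Sig Gam :=
  @MkOTM G Sig Gam Q (otm_q0 M1, otm_q0 M2) I (copair (otm_R0 M1) (otm_R0 M2)) inter_Delta.

Lemma otm_inter_runs q R w :
  otm_runs (M := otm_inter) q R w <->
  otm_runs q.1 (R \o inl) w /\ otm_runs q.2 (R \o inr) w.
Proof.
elim: w q R => [//|[[a d] [g d']] w IH] q R /=.
have E1 : relpre (omap inl) (order_type R d) = order_type (R \o inl) d :> rel _.
  exact/relpre_order_type/oapp_omap.
have E2 : relpre (omap inr) (order_type R d) = order_type (R \o inr) d :> rel _.
  exact/relpre_order_type/oapp_omap.
split.
- move=> [src [u [q' [Hstep [-> Hw]]]]].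
  case: Hstep => src1 [u1 [src2 [u2 [HD1 [HD2 [Esrc [Eu /order_type_eqP Eout]]]]]]].
  subst src u; move/IH: Hw => [Hw1 Hw2].
  split.
  + exists src1, u1, q'.1; rewrite -E1 oapp_omap; do 2!split=> //.
    by move: Hw1; rewrite oapp_copair_inl.
  + exists src2, u2, q'.2; rewrite -E2 Eout /= oapp_omap; do 2!split=> //.
    by move: Hw2; rewrite oapp_copair_inr.
- move=> [[src1 [u1 [q1' [HD1 [-> Hw1]]]]] [src2 [u2 [q2' [HD2 [Eout Hw2]]]]]].
  exists (copair (omap inl \o src1) (omap inr \o src2)), (inl u1), (q1', q2'); split.
    exists src1, u1, src2, u2; rewrite E1 E2; do 4!split=> //.
    by apply/order_type_eqP; rewrite /= !oapp_omap.
  by rewrite /= oapp_omap; split=> //; apply/IH; rewrite oapp_copair_inl oapp_copair_inr.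
Qed.

Lemma otm_inter_sem w : otm_sem otm_inter w <-> otm_sem M1 w /\ otm_sem M2 w.
Proof. exact: otm_inter_runs. Qed.

End Inter.

Section Comp.
Variables (G : linear_group) (Sig Gam The : finType).
Variables (M1 : OTM G Sig Gam) (M2 : OTM G Gam The).
Local Notation I1 := (otm_I M1).
Local Notation I2 := (otm_I M2).
Local Notation I := ((I1 + I2)%type : finType).
Local Notation Q := ((otm_Q M1 * otm_Q M2)%type : finType).

(* The input of [M2] is the output of [M1], i.e. the new value of register [u1] of [M1]. *)
Definition feed (src1 : I1 -> option I1) (u1 : I1) (x : option I2) : option I :=
  if x is Some j then Some (inr j) else omap inl (src1 u1).

Lemma oapp_feed (R : I -> G) d src1 u1 x :
  oapp R d (feed src1 u1 x) = oapp (R \o inr) (oapp (R \o inl) d (src1 u1)) x.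
Proof. by case: x => //=; rewrite oapp_omap. Qed.

Lemma oapp_copair_feed (R : I -> G) d src1 u1 (src2 : I2 -> option I2) :
  (oapp R d \o copair (omap inl \o src1) (feed src1 u1 \o src2)) \o inr =
  oapp (R \o inr) (oapp (R \o inl) d (src1 u1)) \o src2.
Proof. by apply: funext => j; apply: oapp_feed. Qed.

Definition comp_Delta (q : Q) (a : Sig) (gd : rel (option I)) (src : I -> option I)
    (u : I) (t : The) (q' : Q) : Prop :=
  exists src1 u1 g src2 u2,
    otm_Delta q.1 a (relpre (omap inl) gd) src1 u1 g q'.1 /\
    otm_Delta q.2 g (relpre (feed src1 u1) gd) src2 u2 t q'.2 /\
    src = copair (omap inl \o src1) (feed src1 u1 \o src2) /\ u = inr u2.

Definition otm_comp : OTM G Sig The :=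
  @MkOTM G Sig The Q (otm_q0 M1, otm_q0 M2) I (copair (otm_R0 M1) (otm_R0 M2)) comp_Delta.

Lemma otm_comp_runs q R w :
  otm_runs (M := otm_comp) q R w <->
  compose (otm_runs q.1 (R \o inl)) (otm_runs q.2 (R \o inr)) w.
Proof.
elim: w q R => [|[[a d] [t d']] w IH] q R /=; first by split=> // _; exists [::].
have E1 : relpre (omap inl) (order_type R d) = order_type (R \o inl) d :> rel _.
  exact/relpre_order_type/oapp_omap.
have E2 src1 u1 : relpre (feed src1 u1) (order_type R d) =
                  order_type (R \o inr) (oapp (R \o inl) d (src1 u1)) :> rel _.
  exact/relpre_order_type/oapp_feed.
split.
- move=> [_ [_ [q' [[src1 [u1 [g [src2 [u2 [HD1 [HD2 [-> ->]]]]]]]] [-> Hw]]]]].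
  move/IH: Hw => [s3 [Hsize [Hw1 Hw2]]].
  exists ((g, oapp (R \o inl) d (src1 u1)) :: s3); split; first by rewrite /= Hsize.
  split.
  + exists src1, u1, q'.1; rewrite -E1; do 2!split=> //.
    by move: Hw1; rewrite oapp_copair_inl.
  + exists src2, u2, q'.2; rewrite -E2; split=> //; split; first exact: oapp_feed.
    by move: Hw2; rewrite oapp_copair_feed.
- case=> -[|[g d3] s3] [Hsize [Hw1 Hw2]] //.
  move: Hsize Hw1 Hw2 => /= [Hsize] [src1 [u1 [q1' [HD1 [-> Hw1]]]]].
  move=> [src2 [u2 [q2' [HD2 [-> Hw2]]]]].
  exists (copair (omap inl \o src1) (feed src1 u1 \o src2)), (inr u2), (q1', q2').
  split; first by exists src1, u1, g, src2, u2; rewrite E1 E2.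
  split; first by rewrite /= oapp_feed.
  apply/IH; exists s3; split=> //.
  by rewrite oapp_copair_inl oapp_copair_feed.
Qed.

Lemma otm_comp_sem w : otm_sem otm_comp w <-> compose (otm_sem M1) (otm_sem M2) w.
Proof. exact: otm_comp_runs. Qed.

End Comp.

Section Closure.
Variables (G : linear_group) (Sig Gam The : finType).

Definition srt_union (S1 S2 : SRT G Sig Gam) : SRT G Sig Gam :=
  srt_of_otm (otm_union (otm_of_srt S1) (otm_of_srt S2)).

Definition srt_inter (S1 S2 : SRT G Sig Gam) : SRT G Sig Gam :=
  srt_of_otm (otm_inter (otm_of_srt S1) (otm_of_srt S2)).

Definition srt_comp (S1 : SRT G Sig Gam) (S2 : SRT G Gam The) : SRT G Sig The :=
  srt_of_otm (otm_comp (otm_of_srt S1) (otm_of_srt S2)).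

Lemma srt_union_sem S1 S2 : add_free S1 -> add_free S2 ->
  forall w, sem (srt_union S1 S2) w <-> sem S1 w \/ sem S2 w.
Proof.
move=> af1 af2 w.
by rewrite srt_of_otm_sem otm_union_sem (otm_of_srt_sem af1) (otm_of_srt_sem af2).
Qed.

Lemma srt_inter_sem S1 S2 : add_free S1 -> add_free S2 ->
  forall w, sem (srt_inter S1 S2) w <-> sem S1 w /\ sem S2 w.
Proof.
move=> af1 af2 w.
by rewrite srt_of_otm_sem otm_inter_sem (otm_of_srt_sem af1) (otm_of_srt_sem af2).
Qed.

Lemma srt_comp_sem S1 S2 : add_free S1 -> add_free S2 ->
  forall w, sem (srt_comp S1 S2) w <-> compose (sem S1) (sem S2) w.
Proof.
move=> af1 af2 w.
by rewrite srt_of_otm_sem otm_comp_sem (otm_of_srt_sem af1) (otm_of_srt_sem af2).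
Qed.

End Closure.

Lemma srt_of_otm_AD (G : linear_group) (Sig Gam : finType) (M : OTM G Sig Gam) :
  dense G -> is_SRT_AD (srt_of_otm M).
Proof. by split; first exact: srt_of_otm_add_free. Qed.

Lemma srt_of_otm_AU (G : linear_group) (Sig Gam : finType) (M : OTM G Sig Gam) :
  (forall i, otm_R0 M i = LG_zero G) -> is_SRT_AU (srt_of_otm M).
Proof. by split; [exact: srt_of_otm_add_free | exact: srt_of_otm_R0]. Qed.

Lemma copair_const (A B C : Type) (f : A -> C) (g : B -> C) c :
  (forall a, f a = c) -> (forall b, g b = c) -> forall x, copair f g x = c.
Proof. by move=> fc gc []. Qed.

Theorem theorem3p20 :
  (closed_union is_SRT_AD /\ closed_inter is_SRT_AD /\ closed_comp is_SRT_AD) /\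
  (closed_union is_SRT_AU /\ closed_inter is_SRT_AU /\ closed_comp is_SRT_AU).
Proof.
split; (split; [|split]).
- move=> G Sig Gam S1 S2 [af1 dG] [af2 _]; exists (srt_union S1 S2).
  by split; [exact: srt_of_otm_AD | exact: srt_union_sem].
- move=> G Sig Gam S1 S2 [af1 dG] [af2 _]; exists (srt_inter S1 S2).
  by split; [exact: srt_of_otm_AD | exact: srt_inter_sem].
- move=> G Sig Gam The S1 S2 [af1 dG] [af2 _]; exists (srt_comp S1 S2).
  by split; [exact: srt_of_otm_AD | exact: srt_comp_sem].
- move=> G Sig Gam S1 S2 [af1 z1] [af2 z2]; exists (srt_union S1 S2).
  by split; [apply/srt_of_otm_AU/copair_const | exact: srt_union_sem].
- move=> G Sig Gam S1 S2 [af1 z1] [af2 z2]; exists (srt_inter S1 S2).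
  by split; [apply/srt_of_otm_AU/copair_const | exact: srt_inter_sem].
- move=> G Sig Gam The S1 S2 [af1 z1] [af2 z2]; exists (srt_comp S1 S2).
  by split; [apply/srt_of_otm_AU/copair_const | exact: srt_comp_sem].
Qed.
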